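(* Let $\gamma$ denote the Euler–Mascheroni constant, $\gamma=\lim_{n\to\infty}\left(\sum_{m=1}^{n}\frac1m-\ln n\right)$. Define the rational numbers $a_1=\frac12$, $a_2=\frac16$, $a_4=\frac35$, $a_6=\frac{79}{126}$, $a_8=\frac{7230}{6241}$, $a_{10}=\frac{4146631}{3833346}$, $a_{12}=\frac{306232774533}{179081182865}$, and $a_{2k+1}=-a_{2k}$ for $1\le k\le 6$ (so $a_3=-\frac16$, $a_5=-\frac35$, \dots, $a_{13}=-\frac{306232774533}{179081182865}$). For a positive integer $n$ define $R_1(n)=\frac{a_1}{n}$ and, for $2\le k\le 13$, the finite continued fraction $$R_k(n)=\cfrac{a_1}{n+\cfrac{a_2 n}{n+\cfrac{a_3 n}{n+\cfrac{\ddots}{n+\cfrac{a_{k-1}n}{n+a_k}}}}},$$ i.e. $R_k(n)=a_1/T_2$ where $T_k=n+a_k$ and $T_j=n+\frac{a_j n}{T_{j+1}}$ for $2\le j\le k-1$. Let $$r_k(n)=\sum_{m=1}^{n}\frac1m-\ln n-R_k(n).$$ Then for every $1\le k\le 13$, $$\lim_{n\to\infty} n^{k+1}\bigl(r_k(n)-\gamma\bigr)=C_k,$$ where $(C_1,\dots,C_{13})=\Bigl(-\frac{1}{12},-\frac{1}{72},\frac{1}{120},\frac{1}{200},-\frac{79}{25200},-\frac{6241}{3175200},\frac{241}{105840},\frac{58081}{22018248},-\frac{262445}{91974960},-\frac{2755095121}{892586949408},\frac{20169451}{3821257440},\frac{406806753641401}{45071152103463200},-\frac{71521421431}{5152068292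800}\Bigr)$.
   Context: $\gamma$ is the Euler–Mascheroni constant. The continued fraction $R_k(n)$ terminates with the denominator $n+a_k$ (not $n+a_kn/\cdots$); for example $R_2(n)=\frac{a_1}{n+a_2}=\frac{3}{6n+1}$ and $R_3(n)=\frac{1}{2n}-\frac{1}{12n^2}$. *)

From Stdlib Require Import Reals.
From Coquelicot Require Import Coquelicot.
Open Scope R_scope.

Fixpoint harmonic (n : nat) : R :=
  match n with
  | O => 0
  | S p => harmonic p + / INR (S p)
  end.

Definition acoef (j : nat) : R :=
  match j with
  | 1%nat => 1/2
  | 2%nat => 1/6
  | 3%nat => - (1/6)
  | 4%nat => 3/5
  | 5%nat => - (3/5)
  | 6%nat => 79/126
  | 7%nat => - (79/126)
  | 8%nat => 7230/6241
  | 9%nat => - (7230/6241)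
  | 10%nat => 4146631/3833346
  | 11%nat => - (4146631/3833346)
  | 12%nat => 306232774533/179081182865
  | 13%nat => - (306232774533/179081182865)
  | _ => 0
  end.

(* cf_tail x m j = T_j for the continued fraction ending at index k = j + m:
   T_k = x + a_k,  T_j = x + a_j x / T_{j+1}. *)
Fixpoint cf_tail (x : R) (m j : nat) : R :=
  match m with
  | O => x + acoef j
  | S m' => x + acoef j * x / cf_tail x m' (S j)
  end.

Definition Rk (k n : nat) : R :=
  match k with
  | O => 0
  | 1%nat => acoef 1 / INR n
  | S (S k') => acoef 1 / cf_tail (INR n) k' 2
  end.

Definition rk (k n : nat) : R := harmonic n - ln (INR n) - Rk k n.

Definition Ccoef (k : nat) : R :=
  match k with
  | 1%nat => - (1/12)
  | 2%nat => - (1/72)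
  | 3%nat => 1/120
  | 4%nat => 1/200
  | 5%nat => - (79/25200)
  | 6%nat => - (6241/3175200)
  | 7%nat => 241/105840
  | 8%nat => 58081/22018248
  | 9%nat => - (262445/91974960)
  | 10%nat => - (2755095121/892586949408)
  | 11%nat => 20169451/3821257440
  | 12%nat => 406806753641401/45071152103463200
  | 13%nat => - (71521421431/5152068292800)
  | _ => 0
  end.

(* Put x = 1/n and let S(x) = x/2 - sum_{i=1}^{7} B_(2i) x^(2i) / (2i) be the truncated
   Euler-Maclaurin expansion of H_n - ln n - gamma.

   The error e_n = H_n - ln n - gamma - S(1/n) tends to 0, and e_n - e_(n+1) = O(n^-16):
   since 1/(n+1) = x/(1+x), this increment is ln(1+x) - x/(1+x) - S(x) + S(x/(1+x)), and a
   polynomial identity shows that the degree-16 Taylor polynomial of ln(1+x) absorbs all of it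
   up to order x^16.  Summing the increments over the tail gives e_n = O(n^-15).

   On the other side, R_k(n) = a_1 x Q_k(x) / P_k(x) for the continuants P_k, Q_k of the
   continued fraction, and P_k stays bounded away from 0 for small x.  The exact identity
   S P_k - a_1 x Q_k = x^(k+1) (C_k P_k + x M_k) over the rationals, checked by computation,
   gives n^(k+1) (S(1/n) - R_k(n)) = C_k + O(1/n).  As k + 1 <= 14, both estimates combine. *)

From Stdlib Require Import Reals Lra Lia List QArith Qreals.
From Coquelicot Require Import Coquelicot.
Import ListNotations.
Open Scope R_scope.

(** * Polynomials with rational coefficients *)

(* Coefficient lists, lowest degree first, evaluated at a real point; the rational arithmetic
   lets the polynomial identities below be checked by [vm_compute]. *)
Fixpoint qhorner (p : list Q) (x : R) : R :=
  match p with
  | nil => 0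
  | c :: p' => Q2R c + x * qhorner p' x
  end.

Fixpoint qpoly_add (p q : list Q) : list Q :=
  match p, q with
  | nil, _ => q
  | _, nil => p
  | a :: p', b :: q' => Qplus' a b :: qpoly_add p' q'
  end.

Definition qpoly_scale (c : Q) (p : list Q) : list Q := map (Qmult' c) p.

Fixpoint qpoly_mul (p q : list Q) : list Q :=
  match p with
  | nil => nil
  | a :: p' => qpoly_add (qpoly_scale a q) (0%Q :: qpoly_mul p' q)
  end.

Definition qpoly_shift (n : nat) (p : list Q) : list Q := repeat 0%Q n ++ p.

Definition qpoly_is_zero (p : list Q) : bool := forallb (fun c => Qeq_bool c 0) p.

Fixpoint qpoly_norm1 (p : list Q) : R :=
  match p with
  | nil => 0
  | c :: p' => Rabs (Q2R c) + qpoly_norm1 p'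
  end.

Lemma Q2R_0 : Q2R 0 = 0.
Proof. unfold Q2R; simpl; field. Qed.

Lemma Q2R_1 : Q2R 1 = 1.
Proof. unfold Q2R; simpl; field. Qed.

Lemma Q2R_opp1 : Q2R (-1) = -1.
Proof. unfold Q2R; simpl; field. Qed.

Lemma qhorner_add p q x : qhorner (qpoly_add p q) x = qhorner p x + qhorner q x.
Proof.
  revert q; induction p as [|a p IH]; intros [|b q]; cbn [qpoly_add qhorner]; try ring.
  rewrite IH, (Qeq_eqR _ _ (Qplus'_correct a b)), Q2R_plus; ring.
Qed.

Lemma qhorner_scale c p x : qhorner (qpoly_scale c p) x = Q2R c * qhorner p x.
Proof.
  unfold qpoly_scale; induction p as [|a p IH]; cbn [map qhorner]; [ring|].
  rewrite IH, (Qeq_eqR _ _ (Qmult'_correct c a)), Q2R_mult; ring.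
Qed.

Lemma qhorner_mul p q x : qhorner (qpoly_mul p q) x = qhorner p x * qhorner q x.
Proof.
  induction p as [|a p IH]; cbn [qpoly_mul qhorner]; [ring|].
  rewrite qhorner_add, qhorner_scale; cbn [qhorner]; rewrite IH, Q2R_0; ring.
Qed.

Lemma qhorner_shift n p x : qhorner (qpoly_shift n p) x = x ^ n * qhorner p x.
Proof.
  unfold qpoly_shift; induction n as [|n IH]; cbn [repeat app qhorner pow]; [ring|].
  rewrite IH, Q2R_0; ring.
Qed.

Lemma qhorner_divisible n p x :
  qpoly_is_zero (firstn n p) = true -> qhorner p x = x ^ n * qhorner (skipn n p) x.
Proof.
  revert p; induction n as [|n IH]; intros [|c p] Hz; cbn [firstn skipn qhorner pow] in *;
    try ring.
  apply andb_prop in Hz as [Hc Hz].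
  rewrite (Qeq_eqR _ _ (Qeq_bool_eq _ _ Hc)), Q2R_0, (IH p Hz); ring.
Qed.

Lemma qhorner_bound p x : 0 <= x <= 1 -> Rabs (qhorner p x) <= qpoly_norm1 p.
Proof.
  intros Hx; induction p as [|c p IH]; cbn [qhorner qpoly_norm1].
  - rewrite Rabs_R0; lra.
  - eapply Rle_trans; [apply Rabs_triang|].
    rewrite Rabs_mult, (Rabs_pos_eq x) by lra.
    pose proof (Rabs_pos (qhorner p x)); nra.
Qed.

Lemma inv_INR_bounds n : (1 <= n)%nat -> 0 < / INR n <= 1.
Proof.
  intros Hn; assert (Hy : 1 <= INR n) by (apply (le_INR 1); lia).
  split; [apply Rinv_0_lt_compat | rewrite <- Rinv_1; apply Rinv_le_contravar]; lra.
Qed.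

Lemma is_lim_seq_of_inv_bound (u : nat -> R) (l B : R) (N0 : nat) :
  (forall n, (N0 <= n)%nat -> Rabs (u n - l) <= B / INR n) -> is_lim_seq u l.
Proof.
  intros Hu.
  assert (HB : is_lim_seq (fun n => B / INR n) 0).
  { replace (Finite 0) with (Rbar_mult B (Rbar_inv p_infty)) by (simpl; f_equal; ring).
    apply is_lim_seq_scal_l, is_lim_seq_inv; [exact is_lim_seq_INR | discriminate]. }
  apply is_lim_seq_le_le_loc with (fun n => l - B / INR n) (fun n => l + B / INR n).
  - exists N0; intros n Hn; apply Rabs_le_between'; exact (Hu n Hn).
  - replace (Finite l) with (Rbar_minus l 0) by (simpl; f_equal; ring).
    apply is_lim_seq_minus'; [apply is_lim_seq_const | exact HB].
  - replace (Finite l) with (Rbar_plus l 0) by (simpl; f_equal; ring).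
    apply is_lim_seq_plus'; [apply is_lim_seq_const | exact HB].
Qed.

Lemma inv_pow_le_telescope (p : nat) (a m : R) : 1 <= a <= m ->
  / m ^ (p + 2) <= 2 / a ^ p * (/ m - / (m + 1)).
Proof.
  intros Ham.
  assert (Hap : a ^ p <= m ^ p) by (apply pow_incr; lra).
  assert (Ha0 : 0 < a ^ p) by (apply pow_lt; lra).
  replace (2 / a ^ p * (/ m - / (m + 1))) with (/ (a ^ p * (m * (m + 1) / 2)))
    by (field; lra).
  rewrite pow_add; cbn [pow].
  apply Rinv_le_contravar; [apply Rmult_lt_0_compat; nra|].
  apply Rmult_le_compat; nra.
Qed.

(* Sum the increments from n on and compare with the telescoping sum of 1/m - 1/(m+1). *)
Lemma Rabs_le_of_increments (u : nat -> R) (K : R) (p : nat) :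
  is_lim_seq u 0 ->
  (forall n, (1 <= n)%nat -> Rabs (u n - u (S n)) <= K / INR n ^ (p + 2)) ->
  forall n, (1 <= n)%nat -> Rabs (u n) <= 2 * K / INR n ^ (p + 1).
Proof.
  intros Hu Hinc n Hn.
  assert (INR_ge1 : forall m, (1 <= m)%nat -> 1 <= INR m)
    by (intros m Hm; apply (le_INR 1); lia).
  assert (HK : 0 <= K).
  { pose proof (Hinc 1%nat (le_n 1)) as H1; cbn [INR] in H1; rewrite pow1, Rdiv_1_r in H1.
    pose proof (Rabs_pos (u 1%nat - u 2%nat)); lra. }
  pose proof (INR_ge1 n Hn) as Hy.
  assert (Hpow : 0 < INR n ^ p) by (apply pow_lt; lra).
  assert (Hpartial : forall N,
    Rabs (u n - u (n + N)%nat) <= 2 * K / INR n ^ p * (/ INR n - / INR (n + N))).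
  { induction N as [|N IH].
    - rewrite Nat.add_0_r, !Rminus_diag, Rabs_R0, Rmult_0_r; lra.
    - rewrite Nat.add_succ_r.
      pose proof (Hinc (n + N)%nat ltac:(lia)).
      assert (Hm : INR n <= INR (n + N)) by (apply le_INR; lia).
      pose proof (inv_pow_le_telescope p (INR n) (INR (n + N)) ltac:(lra)).
      replace (u n - u (S (n + N)))
        with ((u n - u (n + N)%nat) + (u (n + N)%nat - u (S (n + N)))) by ring.
      eapply Rle_trans; [apply Rabs_triang|].
      rewrite S_INR.
      assert (K / INR (n + N) ^ (p + 2)
              <= K * (2 / INR n ^ p * (/ INR (n + N) - / (INR (n + N) + 1))))
        by (unfold Rdiv at 1; apply Rmult_le_compat_l; lra).
      replace (2 * K / INR n ^ p * (/ INR n - / (INR (n + N) + 1))) with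
        (2 * K / INR n ^ p * (/ INR n - / INR (n + N))
         + K * (2 / INR n ^ p * (/ INR (n + N) - / (INR (n + N) + 1))))
        by (field; repeat split; lra).
      lra. }
  assert (Hlim : is_lim_seq (fun N => Rabs (u n - u (N + n)%nat)) (Rabs (u n - 0))).
  { apply (is_lim_seq_abs _ (Finite (u n - 0))).
    apply is_lim_seq_minus'; [apply is_lim_seq_const|].
    exact (proj1 (is_lim_seq_incr_n u n 0) Hu). }
  assert (Hbound : forall N, Rabs (u n - u (N + n)%nat) <= 2 * K / INR n ^ (p + 1)).
  { intros N; rewrite Nat.add_comm; eapply Rle_trans; [apply Hpartial|].
    pose proof (inv_INR_bounds (n + N) ltac:(lia)).
    replace (2 * K / INR n ^ (p + 1)) with (2 * K / INR n ^ p * / INR n)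
      by (rewrite pow_add; field; lra).
    apply Rmult_le_compat_l; [|lra].
    apply Rmult_le_pos; [lra | left; apply Rinv_0_lt_compat; lra]. }
  pose proof (is_lim_seq_le _ _ _ _ Hbound Hlim (is_lim_seq_const _)) as H.
  simpl in H; rewrite Rminus_0_r in H; exact H.
Qed.

Fixpoint log1p_taylor (N : nat) (x : R) : R :=
  match N with
  | O => 0
  | S N' => log1p_taylor N' x + (-1) ^ N' * x ^ N / INR N
  end.

Lemma log1p_taylor_0 N : log1p_taylor N 0 = 0.
Proof.
  induction N as [|N IH]; cbn [log1p_taylor]; [reflexivity|].
  rewrite IH, pow_i by lia; lra.
Qed.

Lemma is_derive_log1p_taylor N x : -1 < x ->
  is_derive (log1p_taylor N) x ((1 - (- x) ^ N) / (1 + x)).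
Proof.
  intros Hx; induction N as [|N IH].
  - replace ((1 - (- x) ^ 0) / (1 + x)) with 0 by (simpl; field; lra).
    apply (is_derive_const 0).
  - cbn [log1p_taylor].
    replace ((1 - (- x) ^ S N) / (1 + x)) with ((1 - (- x) ^ N) / (1 + x) + (- x) ^ N)
      by (cbn [pow]; field; lra).
    apply (is_derive_plus (log1p_taylor N)); [exact IH|].
    pose proof (pos_INR N).
    auto_derive; [exact I|].
    change (match N with 0%nat => 1 | S _ => INR N + 1 end) with (INR (S N)).
    replace (- x) with ((-1) * x) by ring.
    rewrite S_INR, Rpow_mult_distr; field; lra.
Qed.

(* Mean value theorem: the derivative of the error is (-t)^N / (1 + t), of modulus <= t^N. *)
Lemma log1p_taylor_error N x : 0 <= x <= 1 ->
  Rabs (ln (1 + x) - log1p_taylor N x) <= x ^ S N.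
Proof.
  intros Hx.
  set (h t := ln (1 + t) - log1p_taylor N t).
  assert (Hh : forall t, 0 <= t -> is_derive h t ((- t) ^ N / (1 + t))).
  { intros t Ht; unfold h.
    replace ((- t) ^ N / (1 + t)) with (/ (1 + t) - (1 - (- t) ^ N) / (1 + t)) by (field; lra).
    apply (is_derive_minus (fun t => ln (1 + t))).
    - auto_derive; [lra | field; lra].
    - apply is_derive_log1p_taylor; lra. }
  destruct (MVT_gen h 0 x (fun t => (- t) ^ N / (1 + t))) as [c [Hc Hmvt]].
  { intros t Ht; rewrite Rmin_left in Ht by lra; apply Hh; lra. }
  { intros t Ht; rewrite Rmin_left in Ht by lra.
    apply derivable_continuous_pt, ex_derive_Reals_0; eexists; apply Hh; lra. }
  rewrite Rmin_left, Rmax_right in Hc by lra.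
  change (Rabs (h x) <= x ^ S N).
  replace (h x) with (h x - h 0) by (unfold h; rewrite log1p_taylor_0, Rplus_0_r, ln_1; ring).
  rewrite Hmvt, Rminus_0_r, Rabs_mult, Rabs_div by lra.
  rewrite <- RPow_abs, Rabs_Ropp, !Rabs_pos_eq by lra.
  cbn [pow]; rewrite (Rmult_comm x).
  apply Rmult_le_compat_r; [lra|].
  pose proof (pow_le c N ltac:(lra)); pose proof (pow_incr c x N ltac:(lra)).
  apply Rle_trans with (c ^ N); [|lra].
  apply Rmult_le_reg_r with (1 + c); [lra|].
  unfold Rdiv; rewrite Rmult_assoc, Rinv_l by lra; nra.
Qed.

(** * Continuants of the continued fraction *)

Definition acoefQ (j : nat) : Q :=
  match j with
  | 1%nat => 1#2
  | 2%nat => 1#6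
  | 3%nat => -1#6
  | 4%nat => 3#5
  | 5%nat => -3#5
  | 6%nat => 79#126
  | 7%nat => -79#126
  | 8%nat => 7230#6241
  | 9%nat => -7230#6241
  | 10%nat => 4146631#3833346
  | 11%nat => -4146631#3833346
  | 12%nat => 306232774533#179081182865
  | 13%nat => -306232774533#179081182865
  | _ => 0
  end.

Lemma Q2R_acoefQ j : Q2R (acoefQ j) = acoef j.
Proof.
  do 14 (destruct j as [|j]; [unfold Q2R; cbn [acoefQ acoef Qnum Qden]; field|]).
  unfold Q2R; cbn [acoefQ acoef Qnum Qden]; field.
Qed.

Lemma acoef_bound j : -2 <= acoef j <= 2.
Proof. do 14 (destruct j as [|j]; [cbn [acoef]; lra|]). cbn [acoef]; lra. Qed.

(* The numerator polynomials of the continued fraction: in x = 1/n, the tail T_j of R_k(n)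
   is n K_(m+1)^j(x) / K_m^(j+1)(x), where K_m^j = [continuant m j]. *)
Fixpoint continuant (m j : nat) : list Q :=
  match m with
  | O => [1%Q]
  | S O => [1; acoefQ j]%Q
  | S (S m'' as m') =>
      qpoly_add (continuant m' (S j))
        (0%Q :: qpoly_scale (acoefQ j) (continuant m'' (S (S j))))
  end.

Lemma qhorner_continuant_0 j x : qhorner (continuant 0 j) x = 1.
Proof. cbn [continuant qhorner]; rewrite Q2R_1; ring. Qed.

Lemma qhorner_continuant_1 j x : qhorner (continuant 1 j) x = 1 + acoef j * x.
Proof. cbn [continuant qhorner]; rewrite Q2R_1, Q2R_acoefQ; ring. Qed.

Lemma qhorner_continuant_SS m j x :
  qhorner (continuant (S (S m)) j) x
  = qhorner (continuant (S m) (S j)) x + acoef j * x * qhorner (continuant m (S (S j))) x.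
Proof.
  change (continuant (S (S m)) j) with
    (qpoly_add (continuant (S m) (S j))
       (0%Q :: qpoly_scale (acoefQ j) (continuant m (S (S j))))).
  rewrite qhorner_add; cbn [qhorner]; rewrite qhorner_scale, Q2R_0, Q2R_acoefQ; ring.
Qed.

Section Continuant_bounds.
Variable x : R.
Hypothesis Hx : 0 <= x <= 1/8.
Local Notation K m j := (qhorner (continuant m j) x).

(* Since |a_j x| <= 1/4, each recursion step shrinks a continuant by a factor at most 1/2. *)
Lemma continuant_bounds m :
  forall j, (/ 2) ^ m <= K m j /\ K m (S j) <= 2 * K (S m) j.
Proof.
  induction m as [|m IH]; intros j.
  - rewrite qhorner_continuant_1, !qhorner_continuant_0.
    pose proof (acoef_bound j); cbn [pow]; split; nra.
  - destruct (IH j) as [_ HKj], (IH (S j)) as [HK HKS], (IH (S (S j))) as [HK2 _].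
    pose proof (pow_le (/ 2) m ltac:(lra)).
    split; [cbn [pow]; lra|].
    rewrite qhorner_continuant_SS.
    assert (Hax : - (1/4) <= acoef j * x) by (pose proof (acoef_bound j); nra).
    assert (0 <= (acoef j * x + 1/4) * K m (S (S j))) by (apply Rmult_le_pos; lra).
    nra.
Qed.

Lemma continuant_pos m j : 0 < K m j.
Proof. pose proof (pow_lt (/ 2) m ltac:(lra)); pose proof (continuant_bounds m j); lra. Qed.

End Continuant_bounds.

Lemma inv_le_eighth y : 8 <= y -> 0 <= / y <= 1/8.
Proof.
  intros Hy; split; [left; apply Rinv_0_lt_compat; lra|].
  replace (1/8) with (/ 8) by field; apply Rinv_le_contravar; lra.
Qed.

Lemma cf_tail_continuant y m j : 8 <= y ->
  cf_tail y m j = y * qhorner (continuant (S m) j) (/ y) / qhorner (continuant m (S j)) (/ y).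
Proof.
  intros Hy; pose proof (inv_le_eighth y Hy) as Hx.
  revert j; induction m as [|m IH]; intros j.
  - rewrite qhorner_continuant_1, qhorner_continuant_0; cbn [cf_tail]; field; lra.
  - cbn [cf_tail]; rewrite IH, qhorner_continuant_SS.
    pose proof (continuant_pos _ Hx (S m) (S j)); pose proof (continuant_pos _ Hx m (S (S j))).
    field; lra.
Qed.

(* For k = 1 the truncated subtractions give K_0 = 1 twice, matching R_1(n) = a_1 / n. *)
Definition cf_den (k : nat) : list Q := continuant (k - 1) 2.
Definition cf_num (k : nat) : list Q := continuant (k - 2) 3.

Lemma Rk_continuant k n : (1 <= k)%nat -> 8 <= INR n ->
  Rk k n = acoef 1 * / INR n * qhorner (cf_num k) (/ INR n) / qhorner (cf_den k) (/ INR n).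
Proof.
  intros Hk Hn; pose proof (inv_le_eighth _ Hn) as Hx; unfold cf_num, cf_den.
  destruct k as [|[|k]]; [lia| |].
  - cbn [Rk Nat.sub]; rewrite !qhorner_continuant_0; field; lra.
  - cbn [Rk]; replace (S (S k) - 1)%nat with (S k) by lia.
    replace (S (S k) - 2)%nat with k by lia.
    rewrite cf_tail_continuant by lra.
    pose proof (continuant_pos _ Hx (S k) 2); pose proof (continuant_pos _ Hx k 3).
    field; lra.
Qed.

(** * The truncated Euler-Maclaurin expansion against the continued fraction *)

(* The coefficient of x^(2i) is -B_(2i) / (2i), Bernoulli numbers B_2 = 1/6, ..., B_14 = 7/6. *)
Definition euler_maclaurin_poly : list Q :=
  [0; 1#2; -1#12; 0; 1#120; 0; -1#252; 0; 1#240; 0; -1#132; 0; 691#32760; 0; -1#12]%Q.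

Definition CcoefQ (k : nat) : Q :=
  match k with
  | 1%nat => -1#12
  | 2%nat => -1#72
  | 3%nat => 1#120
  | 4%nat => 1#200
  | 5%nat => -79#25200
  | 6%nat => -6241#3175200
  | 7%nat => 241#105840
  | 8%nat => 58081#22018248
  | 9%nat => -262445#91974960
  | 10%nat => -2755095121#892586949408
  | 11%nat => 20169451#3821257440
  | 12%nat => 406806753641401#45071152103463200
  | 13%nat => -71521421431#5152068292800
  | _ => 0
  end.

Lemma Q2R_CcoefQ k : Q2R (CcoefQ k) = Ccoef k.
Proof.
  do 14 (destruct k as [|k]; [unfold Q2R; cbn [CcoefQ Ccoef Qnum Qden]; field|]).
  unfold Q2R; cbn [CcoefQ Ccoef Qnum Qden]; field.
Qed.

(* S P_k - a_1 X Q_k - C_k X^(k+1) P_k; the constants C_k are exactly what makes it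
   divisible by X^(k+2). *)
Definition cf_remainder (k : nat) : list Q :=
  qpoly_add (qpoly_mul euler_maclaurin_poly (cf_den k))
    (qpoly_scale (-1)
       (qpoly_add (0%Q :: qpoly_scale (acoefQ 1) (cf_num k))
          (qpoly_shift (k + 1) (qpoly_scale (CcoefQ k) (cf_den k))))).

Lemma cf_remainder_divisible k :
  (1 <= k <= 13)%nat -> qpoly_is_zero (firstn (k + 2) (cf_remainder k)) = true.
Proof.
  intros Hk; do 14 (destruct k as [|k]; [lia || (vm_compute; reflexivity)|]); lia.
Qed.

Lemma euler_maclaurin_cf_identity k x : (1 <= k <= 13)%nat ->
  qhorner euler_maclaurin_poly x * qhorner (cf_den k) x
  - acoef 1 * x * qhorner (cf_num k) x
  = x ^ (k + 1) * (Ccoef k * qhorner (cf_den k) x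
                   + x * qhorner (skipn (k + 2) (cf_remainder k)) x).
Proof.
  intros Hk; pose proof (qhorner_divisible _ _ x (cf_remainder_divisible k Hk)) as H.
  unfold cf_remainder at 1 in H.
  rewrite qhorner_add, qhorner_mul, qhorner_scale, qhorner_add in H; cbn [qhorner] in H.
  rewrite qhorner_scale, qhorner_shift, qhorner_scale, Q2R_opp1, Q2R_0,
    Q2R_acoefQ, Q2R_CcoefQ in H.
  replace (x ^ (k + 2)) with (x * x ^ (k + 1)) in H
    by (replace (k + 2)%nat with (S (k + 1)) by lia; reflexivity).
  lra.
Qed.

Lemma Rk_expansion k n : (1 <= k <= 13)%nat -> (8 <= n)%nat ->
  Rabs (INR n ^ (k + 1) * (qhorner euler_maclaurin_poly (/ INR n) - Rk k n) - Ccoef k)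
  <= 2 ^ (k - 1) * qpoly_norm1 (skipn (k + 2) (cf_remainder k)) / INR n.
Proof.
  intros Hk Hn.
  assert (Hy : 8 <= INR n) by (apply (le_INR 8) in Hn; simpl in Hn; lra).
  pose proof (inv_le_eighth _ Hy) as Hx.
  rewrite Rk_continuant by (lia || lra).
  set (x := / INR n) in *.
  pose proof (euler_maclaurin_cf_identity k x Hk) as Hid.
  set (P := qhorner (cf_den k) x) in *.
  set (M := qhorner (skipn (k + 2) (cf_remainder k)) x) in *.
  set (N := qpoly_norm1 (skipn (k + 2) (cf_remainder k))).
  assert (HP : (/ 2) ^ (k - 1) <= P) by apply (continuant_bounds _ Hx).
  assert (HP0 : 0 < (/ 2) ^ (k - 1)) by (apply pow_lt; lra).
  assert (Hyk : INR n ^ (k + 1) <> 0) by (apply pow_nonzero; lra).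
  replace (INR n ^ (k + 1)
           * (qhorner euler_maclaurin_poly x - acoef 1 * x * qhorner (cf_num k) x / P)
           - Ccoef k) with (x * M / P).
  2:{ replace (qhorner euler_maclaurin_poly x - acoef 1 * x * qhorner (cf_num k) x / P)
        with ((qhorner euler_maclaurin_poly x * P - acoef 1 * x * qhorner (cf_num k) x) / P)
        by (field; lra).
      rewrite Hid; unfold x; rewrite pow_inv; field; lra. }
  assert (HinvP : 0 < / P <= 2 ^ (k - 1)).
  { split; [apply Rinv_0_lt_compat; lra|].
    rewrite <- (Rinv_inv (2 ^ (k - 1))), <- pow_inv; apply Rinv_le_contravar; lra. }
  assert (HM : Rabs M <= N) by (apply qhorner_bound; lra).
  replace (Rabs (x * M / P)) with (x * Rabs M * / P)
    by (unfold Rdiv; rewrite !Rabs_mult, Rabs_inv, (Rabs_pos_eq x), (Rabs_pos_eq P); lra).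
  unfold Rdiv; fold x; replace (2 ^ (k - 1) * N * x) with (x * N * 2 ^ (k - 1)) by ring.
  pose proof (Rabs_pos M).
  apply Rmult_le_compat; [nra | lra | apply Rmult_le_compat_l; lra | lra].
Qed.

(** * The Euler-Maclaurin error of the harmonic numbers *)

Lemma qhorner_euler_maclaurin_poly_bound x : 0 <= x <= 1 ->
  Rabs (qhorner euler_maclaurin_poly x) <= qpoly_norm1 euler_maclaurin_poly * x.
Proof.
  intros Hx.
  change (qhorner euler_maclaurin_poly x)
    with (Q2R 0 + x * qhorner (tl euler_maclaurin_poly) x).
  change (qpoly_norm1 euler_maclaurin_poly)
    with (Rabs (Q2R 0) + qpoly_norm1 (tl euler_maclaurin_poly)).
  rewrite Q2R_0, Rplus_0_l, Rabs_R0, Rplus_0_l, Rabs_mult, (Rabs_pos_eq x) by lra.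
  pose proof (qhorner_bound (tl euler_maclaurin_poly) x Hx); nra.
Qed.

(* x^(-16) (1 + x)^14 (T_16(x) - x/(1+x) - S(x) + S(x/(1+x))), T_16 the Taylor polynomial
   of ln(1 + x); it is a polynomial because S is the Euler-Maclaurin expansion to order 14. *)
Definition euler_maclaurin_defect : list Q :=
  [0; 211#30; 6883#180; 32609#315; 89245#504; 26885#132; 67073#440; 9176#165;
   -179203#7920; -498629#10296; -474889#13104; -12823#780; -7967#1680; -97#120; -1#16]%Q.

Lemma euler_maclaurin_defect_identity x : 0 <= x ->
  log1p_taylor 16 x - x / (1 + x)
  - qhorner euler_maclaurin_poly x + qhorner euler_maclaurin_poly (x / (1 + x))
  = x ^ 16 * qhorner euler_maclaurin_defect x / (1 + x) ^ 14.
Proof.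
  intros Hx.
  cbn [log1p_taylor INR qhorner euler_maclaurin_poly euler_maclaurin_defect].
  unfold Q2R; cbn [Qnum Qden]; field; lra.
Qed.

Section Euler_Maclaurin_error.
Variable gamma : R.

Definition euler_maclaurin_error (n : nat) : R :=
  harmonic n - ln (INR n) - gamma - qhorner euler_maclaurin_poly (/ INR n).

Lemma euler_maclaurin_error_step n : (1 <= n)%nat ->
  euler_maclaurin_error n - euler_maclaurin_error (S n)
  = (ln (1 + / INR n) - log1p_taylor 16 (/ INR n))
    + (/ INR n) ^ 16 * qhorner euler_maclaurin_defect (/ INR n) / (1 + / INR n) ^ 14.
Proof.
  intros Hn; pose proof (inv_INR_bounds n Hn) as Hx.
  assert (Hy : 1 <= INR n) by (apply (le_INR 1); lia).
  rewrite <- euler_maclaurin_defect_identity by lra.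
  unfold euler_maclaurin_error; cbn [harmonic]; rewrite S_INR.
  replace (INR n + 1) with (INR n * (1 + / INR n)) by (field; lra).
  rewrite ln_mult by (try apply Rplus_lt_0_compat; try apply Rinv_0_lt_compat; lra).
  replace (/ (INR n * (1 + / INR n))) with (/ INR n / (1 + / INR n)) by (field; lra).
  ring.
Qed.

Lemma euler_maclaurin_error_step_bound n : (1 <= n)%nat ->
  Rabs (euler_maclaurin_error n - euler_maclaurin_error (S n))
  <= (1 + qpoly_norm1 euler_maclaurin_defect) / INR n ^ 16.
Proof.
  intros Hn; pose proof (inv_INR_bounds n Hn) as Hx.
  rewrite euler_maclaurin_error_step by exact Hn.
  replace ((1 + qpoly_norm1 euler_maclaurin_defect) / INR n ^ 16)
    with ((1 + qpoly_norm1 euler_maclaurin_defect) * (/ INR n) ^ 16)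
    by (rewrite pow_inv; reflexivity).
  set (x := / INR n) in *.
  pose proof (pow_lt x 16 ltac:(lra)) as Hx16.
  pose proof (log1p_taylor_error 16 x ltac:(lra)) as Hlog.
  assert (x ^ 17 <= x ^ 16) by (cbn [pow]; nra).
  assert (Hinv : 0 < / (1 + x) ^ 14 <= 1).
  { pose proof (Rle_pow (1 + x) 0 14 ltac:(lra) ltac:(lia)); cbn [pow] in *.
    split; [apply Rinv_0_lt_compat | rewrite <- Rinv_1; apply Rinv_le_contravar]; lra. }
  assert (Hdef : Rabs (x ^ 16 * qhorner euler_maclaurin_defect x / (1 + x) ^ 14)
                 <= x ^ 16 * qpoly_norm1 euler_maclaurin_defect).
  { unfold Rdiv; rewrite !Rabs_mult, Rabs_inv, (Rabs_pos_eq (x ^ 16)),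
      (Rabs_pos_eq ((1 + x) ^ 14)) by (try apply pow_le; lra).
    pose proof (qhorner_bound euler_maclaurin_defect x ltac:(lra)).
    pose proof (Rabs_pos (qhorner euler_maclaurin_defect x)).
    rewrite Rmult_assoc; apply Rmult_le_compat_l; nra. }
  eapply Rle_trans; [apply Rabs_triang|]; lra.
Qed.

Hypothesis Hgamma : is_lim_seq (fun n : nat => harmonic n - ln (INR n)) gamma.

Lemma euler_maclaurin_error_lim : is_lim_seq euler_maclaurin_error 0.
Proof.
  replace (Finite 0) with (Rbar_minus (gamma - gamma) 0) by (simpl; f_equal; ring).
  apply is_lim_seq_minus'; [apply is_lim_seq_minus'; [exact Hgamma | apply is_lim_seq_const]|].
  apply (is_lim_seq_of_inv_bound _ _ (qpoly_norm1 euler_maclaurin_poly) 1); intros n Hn.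
  pose proof (inv_INR_bounds n Hn).
  rewrite Rminus_0_r; apply qhorner_euler_maclaurin_poly_bound; lra.
Qed.

Lemma euler_maclaurin_error_bound n : (1 <= n)%nat ->
  Rabs (euler_maclaurin_error n) <= 2 * (1 + qpoly_norm1 euler_maclaurin_defect) / INR n ^ 15.
Proof.
  exact (Rabs_le_of_increments euler_maclaurin_error _ 14
           euler_maclaurin_error_lim euler_maclaurin_error_step_bound n).
Qed.

End Euler_Maclaurin_error.

Theorem theorem1 (gamma : R)
  (Hgamma : is_lim_seq (fun n : nat => harmonic n - ln (INR n)) gamma)
  (k : nat) (Hk1 : (1 <= k)%nat) (Hk2 : (k <= 13)%nat) :
  is_lim_seq (fun n : nat => INR n ^ (k + 1) * (rk k n - gamma)) (Ccoef k).
Proof.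
  set (B := 2 ^ (k - 1) * qpoly_norm1 (skipn (k + 2) (cf_remainder k))).
  set (E := 2 * (1 + qpoly_norm1 euler_maclaurin_defect)).
  apply (is_lim_seq_of_inv_bound _ _ (B + E) 8); intros n Hn.
  assert (Hy : 1 <= INR n) by (apply (le_INR 1); lia).
  pose proof (Rk_expansion k n ltac:(lia) Hn) as Hcf; fold B in Hcf.
  pose proof (euler_maclaurin_error_bound gamma Hgamma n ltac:(lia)) as Hem; fold E in Hem.
  replace (INR n ^ (k + 1) * (rk k n - gamma) - Ccoef k) with
    ((INR n ^ (k + 1) * (qhorner euler_maclaurin_poly (/ INR n) - Rk k n) - Ccoef k)
     + INR n ^ (k + 1) * euler_maclaurin_error gamma n)
    by (unfold euler_maclaurin_error, rk; ring).
  assert (Hrest : Rabs (INR n ^ (k + 1) * euler_maclaurin_error gamma n) <= E / INR n).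
  { rewrite Rabs_mult, Rabs_pos_eq by (apply pow_le; lra).
    replace (E / INR n) with (INR n ^ 14 * (E / INR n ^ 15)) by (cbn [pow]; field; lra).
    apply Rmult_le_compat; [apply pow_le; lra | apply Rabs_pos | |exact Hem].
    apply Rle_pow; [lra | lia]. }
  eapply Rle_trans; [apply Rabs_triang|].
  unfold Rdiv in *; rewrite Rmult_plus_distr_r; lra.
Qed.
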